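(* In the M/M/1 setting below, let $p^S_s:=R-C\,\mathbb{E}[W(q^S_s\Lambda)]$ be the fee that induces the joining probability $q^S_s$ in the shared belief case. If $p^S_s\ge0$, then $q^S_s\le q^S_e$; moreover, if $p^S_s=0$ then $q^S_s=q^S_e$.
   Context: Setting: an M/M/1 queue with true (deterministic) Poisson arrival rate $\lambda>0$ and exponential service times with rate $\mu$, so the expected time in system at effective arrival rate $x\in[0,\mu)$ is $W(x)=1/(\mu-x)$. Each served customer receives reward $R$ and incurs waiting cost $C>0$ per unit time, with $R\ge C/\mu$. Customers' beliefs about the arrival rate are described by a non-degenerate nonnegative random variable $\Lambda$ whose support has minimum $\lambda_{\min}$ and maximum $\lambda_{\max}$, with $0\le\lambda_{\min}<\lambda<\lambda_{\max}<\mu$. The social welfare rate as a function of the joining probability $q\in[0,1]$ is $\mathrm{SW}^S(q)=q\lambda\,(R-C\,W(q\lambda))$ (strictly concave on $[0,1]$), and $q^S_s$ is its maximizer over $[0,1]$. The individual (no-fee) equilibrium $q^S_e$ is defined as follows: if $R-C\,\mathbb{E}[W(\Lambda)]\ge0$ then $q^S_e=1$; otherwise $q^S_e$ is the unique $q\in[0,1]$ with $C\,\mathbb{E}[W(q\Lambda)]=R$. *)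

From mathcomp Require Import all_boot all_order all_algebra.
From mathcomp Require Import all_classical all_reals all_analysis.
Set Implicit Arguments. Unset Strict Implicit. Unset Printing Implicit Defensive.
Import Order.TTheory GRing.Theory Num.Theory.
Local Open Scope classical_set_scope.
Local Open Scope ring_scope.

Section mm1.
Context {d : measure_display} {T : measurableType d} {R : realType}.

(* expected time in system of an M/M/1 queue at effective arrival rate x *)
Definition W (mu x : R) : R := (mu - x)^-1.

Definition SW (lam Rw C mu q : R) : R := q * lam * (Rw - C * W mu (q * lam)).

Definition EW (P : probability T R) (L : T -> R) (mu q : R) : \bar R :=
  ('E_P[fun w => W mu (q * L w)])%E.

Definition rv_support (P : probability T R) (L : T -> R) : set R :=
  [set x | forall e : R, 0 < e -> (0 < P [set w | (`|L w - x| < e)%R])%E].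

Definition support_min (P : probability T R) (L : T -> R) (a : R) : Prop :=
  rv_support P L a /\ (forall x, rv_support P L x -> a <= x).

Definition support_max (P : probability T R) (L : T -> R) (b : R) : Prop :=
  rv_support P L b /\ (forall x, rv_support P L x -> x <= b).

Definition nondegenerate_rv (P : probability T R) (L : T -> R) : Prop :=
  ~ (exists c : R, P [set w | L w = c] = 1%E).

Definition is_qs (lam Rw C mu qs : R) : Prop :=
  0 <= qs <= 1 /\ forall q, 0 <= q <= 1 -> SW lam Rw C mu q <= SW lam Rw C mu qs.

(* q^S_e : the individual (no-fee) equilibrium *)
Definition is_qe (P : probability T R) (L : T -> R) (Rw C mu qe : R) : Prop :=
  ((0 <= Rw%:E - C%:E * EW P L mu 1)%E /\ qe = 1)
  \/ ((Rw%:E - C%:E * EW P L mu 1 < 0)%E /\ 0 <= qe <= 1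
      /\ (C%:E * EW P L mu qe = Rw%:E)%E).

End mm1.

From mathcomp Require Import all_boot all_order all_algebra.
From mathcomp Require Import all_classical all_reals all_analysis.
From mathcomp Require Import ring lra.
Import Order.TTheory GRing.Theory Num.Theory measurable_realfun.
Local Open Scope classical_set_scope.
Local Open Scope ring_scope.
Set Implicit Arguments. Unset Strict Implicit. Unset Printing Implicit Defensive.

(* The expected sojourn time E[W(q Lambda)] is finite and strictly increasing in
   q on [0, 1]: Lambda stays below lambda_max < mu almost surely, so W(q Lambda)
   is bounded, and Lambda exceeds lambda_max / 2 with positive probability, so
   raising q raises W(q Lambda) by a definite amount on an event of positive
   mass.  Hence the fee R - C E[W(q Lambda)] is strictly decreasing in q, and
   q_e is where it vanishes (or 1 if it is still nonnegative there); a
   nonnegative fee at q_s thus forces q_s <= q_e, with equality when the fee is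
   zero. *)

Lemma measurable_inv (R : realType) : measurable_fun [set: R] (@GRing.inv R).
Proof.
rewrite -(setvU [set (0:R)]).
apply/measurable_funU; [exact: measurableC | by [] |].
split; last exact: measurable_fun_set1.
apply: open_continuous_measurable_fun.
  by rewrite openC; exact: closed_eq.
by move=> x /set_mem /= x0; apply: inv_continuous; exact/eqP.
Qed.

Lemma W_le (R : realType) (mu x y : R) : x <= y -> y < mu -> W mu x <= W mu y.
Proof.
move=> xy ymu; have xmu := le_lt_trans xy ymu.
by rewrite /W lef_pV2 ?posrE ?subr_gt0 // lerB.
Qed.

Lemma W_increment (R : realType) (mu x y : R) : 0 <= x -> x <= y -> y < mu ->
  W mu x + (y - x) / mu ^+ 2 <= W mu y.
Proof.
move=> x0 xy ymu.
have mux : 0 < mu - x by lra.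
have muy : 0 < mu - y by lra.
have mu0 : 0 < mu by lra.
have -> : W mu y = W mu x + (y - x) / ((mu - x) * (mu - y)).
  by rewrite /W; field; rewrite !lt0r_neq0.
rewrite lerD2l ler_wpM2l ?subr_ge0 // lef_pV2 ?posrE ?mulr_gt0 ?exprn_gt0 //.
by rewrite expr2; apply: ler_pM; lra.
Qed.

Lemma grid_ball_cover (R : realType) (x e : R) : 0 <= x -> 0 < e ->
  exists n k : nat, `|x - k%:R / n.+1%:R| < n.+1%:R^-1 /\
    forall y, `|y - k%:R / n.+1%:R| < n.+1%:R^-1 -> `|y - x| < e.
Proof.
move=> x0 e0; set n := Num.truncn (2 / e); set r : R := n.+1%:R^-1.
have N0 : 0 < n.+1%:R :> R by rewrite ltr0n.
have re : r + r < e.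
  rewrite -mulr2n -mulr_natr mulrC ltr_pdivrMr // mulrC -ltr_pdivrMr //.
  exact: truncnS_gt.
have xn0 : 0 <= x * n.+1%:R by rewrite mulr_ge0 // ler0n.
set k := Num.truncn (x * n.+1%:R).
have /andP [k1 k2] := truncn_itv xn0; rewrite -/k -natr1 in k1 k2.
have xk : `|x - k%:R / n.+1%:R| < r.
  rewrite ltr_distl; apply/andP; split.
    by rewrite -[X in _ - X]mul1r -mulrBl ltr_pdivrMr //; lra.
  by rewrite -[X in _ + X]mul1r -mulrDl ltr_pdivlMr //; lra.
exists n, k; split => // y yk.
rewrite (le_lt_trans (ler_distD (k%:R / n.+1%:R) _ _)) //.
by rewrite (lt_trans _ re) // ltrD // distrC.
Qed.

Section support.
Context d (T : measurableType d) (R : realType) (P : probability T R).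
Variable L : {RV P >-> R}.

Lemma measurable_dist_lt (x e : R) : measurable [set w | `|L w - x| < e].
Proof.
have -> : [set w | `|L w - x| < e] = L @^-1` `](x - e), (x + e)[.
  by apply/seteqP; split => w /=; rewrite in_itv /= ltr_distl.
exact: measurable_funPTI.
Qed.

Lemma measurable_gt (c : R) : measurable [set w | c < L w].
Proof.
have -> : [set w | c < L w] = L @^-1` `]c, +oo[.
  by apply/seteqP; split => w /=; rewrite in_itv /= andbT.
exact: measurable_funPTI.
Qed.

Lemma support_gt_mass x c : rv_support P L x -> c < x ->
  (0 < P [set w | (c < L w)%R])%E.
Proof.
move=> /(_ (x - c)) + cx; rewrite subr_gt0 => /(_ cx) /lt_le_trans; apply.
apply: le_measure; rewrite ?inE; [exact: measurable_dist_lt | exact: measurable_gt |].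
by move=> w /=; rewrite ltr_distl => /andP [+ _]; rewrite opprB addrC subrK.
Qed.

Lemma not_support_null_ball x : ~ rv_support P L x ->
  exists2 e, 0 < e & P [set w | `|L w - x| < e] = 0%E.
Proof.
move=> nsup; apply: contrapT => H; apply: nsup => e e0.
by rewrite lt0e measure_ge0 andbT; apply/eqP => Pe0; apply: H; exists e.
Qed.

Lemma support_tail_negligible b : (forall x, rv_support P L x -> x <= b) ->
  0 <= b -> P.-negligible [set w | b < L w].
Proof.
move=> supb b0.
pose B (n k : nat) := [set w | `|L w - k%:R / n.+1%:R| < n.+1%:R^-1].
pose N n k := B n k `&` [set _ | P (B n k) = 0%E].
apply: (@negligibleS _ _ _ _ (\bigcup_n \bigcup_k N n k)).
- move=> w /= bw.
  have [e e0 Pe] : exists2 e, 0 < e & P [set w' | `|L w' - L w| < e] = 0%E.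
    by apply: not_support_null_ball => /supb; rewrite leNgt bw.
  have [n [k [Bw Be]]] := grid_ball_cover (ltW (le_lt_trans b0 bw)) e0.
  exists n => //; exists k => //; split => //=.
  apply/eqP; rewrite -measure_le0 -Pe le_measure ?inE //;
    [exact: measurable_dist_lt | exact: measurable_dist_lt | by move=> ? /Be].
- apply: negligible_bigcup => n; apply: negligible_bigcup => k.
  have [Bk0|Bk] := pselect (P (B n k) = 0%E).
  + apply: (@negligibleS _ _ _ _ (B n k)); first by move=> w [].
    by apply/negligibleP => //; exact: measurable_dist_lt.
  + apply: (@negligibleS _ _ _ _ set0); first by move=> w [_ /Bk].
    exact: negligible_set0.
Qed.

End support.

Lemma ge0_integralD_scaled_indic d (T : measurableType d) (R : realType)
    (mu : measure T R) (f : T -> R) (S : set T) (k : R) :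
  measurable_fun [set: T] f -> (forall x, 0 <= f x) -> measurable S -> 0 <= k ->
  (\int[mu]_x (f x + k * \1_S x)%:E = \int[mu]_x (f x)%:E + k%:E * mu S)%E.
Proof.
move=> mf f0 mS k0.
under eq_integral do rewrite EFinD EFinM.
rewrite ge0_integralD //; last 4 first.
- by move=> x _; rewrite lee_fin.
- exact/measurable_EFinP.
- by move=> x _; rewrite lee_fin mulr_ge0.
- apply: measurable_funeM; apply/measurable_EFinP.
  exact: measurable_indic.
rewrite ge0_integralZl_EFin //; first by rewrite integral_indic // setIT.
apply/measurable_EFinP; exact: measurable_indic.
Qed.

Section expected_wait.
Context d (T : measurableType d) (R : realType) (P : probability T R).
Variables (L : {RV P >-> R}) (mu b : R).
Hypotheses (b0 : 0 <= b) (bmu : b < mu) (L0 : forall w, 0 <= L w).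
Hypothesis tail0 : P.-negligible [set w | b < L w].

(* Outside a null set [L] lies in [[0, b]], so it may be replaced by [min L b], on
   which the integrand is positive and bounded. *)
Let m w := Num.min (L w) b.
Let h q w := W mu (q * m w).

Let m_itv w : 0 <= m w <= b.
Proof. by rewrite /m le_min L0 b0 ge_min lexx orbT. Qed.

Let measurable_h q : measurable_fun [set: T] (h q).
Proof.
rewrite /h /W; apply: measurableT_comp; first exact: measurable_inv.
apply: measurable_funB => //; apply: measurable_funM => //.
exact: measurable_minr.
Qed.

Let h_bounds q w : 0 <= q <= 1 -> 0 < h q w <= W mu b.
Proof.
move=> /andP [q0 q1]; have /andP [m0 mb] := m_itv w.
have qmb : q * m w <= b by nra.
rewrite W_le // ?andbT // /h /W invr_gt0 subr_gt0; exact: le_lt_trans qmb bmu.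
Qed.

Let EW_truncated q : EW P L mu q = (\int[P]_w (h q w)%:E)%E.
Proof.
rewrite /EW unlock; apply: ae_eq_integral => //.
- apply/measurable_EFinP; rewrite /W; apply: measurableT_comp; first exact: measurable_inv.
  by apply: measurable_funB => //; apply: measurable_funM.
- exact/measurable_EFinP.
- apply: negligibleS tail0 => w /= Lw; rewrite ltNge; apply/negP => Lwb.
  by apply: Lw => _; rewrite /h /m min_l.
Qed.

Lemma EW_fin_num q : 0 <= q <= 1 -> EW P L mu q \is a fin_num.
Proof.
move=> q01; have h0 w : (0 <= (h q w)%:E)%E.
  by rewrite lee_fin; have /andP [/ltW] := h_bounds w q01.
rewrite EW_truncated ge0_fin_numE; last exact: integral_ge0.
apply: (@le_lt_trans _ _ (\int[P]_(w in setT) (cst (W mu b)%:E) w)%E).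
  apply: ge0_le_integral => //; first exact/measurable_EFinP.
  by move=> w _; rewrite lee_fin; have /andP [] := h_bounds w q01.
by rewrite integral_cst // [X in (_ * X)%E]probability_setT mule1 ltry.
Qed.

Lemma EW_lt q1 q2 c : 0 <= q1 -> q1 < q2 -> q2 <= 1 -> 0 < c -> c <= b ->
  (0 < P [set w | (c < L w)%R])%E -> (EW P L mu q1 < EW P L mu q2)%E.
Proof.
move=> q10 q12 q21 c0 cb PS; set S := [set w | c < L w].
have q101 : 0 <= q1 <= 1 by rewrite q10 (ltW (lt_le_trans q12 q21)).
have q201 : 0 <= q2 <= 1 by rewrite q21 (le_trans q10 (ltW q12)).
have mu0 : 0 < mu by exact: le_lt_trans bmu.
set k := (q2 - q1) * c / mu ^+ 2.
have k0 : 0 < k by rewrite divr_gt0 ?exprn_gt0 // mulr_gt0 // subr_gt0.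
have hk w : h q1 w + k * \1_S w <= h q2 w.
  have /andP [m0 mb] := m_itv w.
  have q12m : q1 * m w <= q2 * m w by rewrite ler_wpM2r // ltW.
  have q2m_mu : q2 * m w < mu.
    by rewrite (le_lt_trans _ (le_lt_trans mb bmu)) // -[leRHS]mul1r ler_wpM2r.
  rewrite /h indicE; have [Sw|nSw] := boolP (w \in S).
  - have cm : c <= m w by rewrite le_min cb andbT ltW //; move: Sw; rewrite inE.
    rewrite mulr1 (le_trans _ (W_increment (mulr_ge0 q10 m0) q12m q2m_mu)) //.
    rewrite lerD2l -mulrBl ler_wpM2r ?invr_ge0 ?exprn_ge0 ?(ltW mu0) //.
    by rewrite ler_wpM2l // subr_ge0 ltW.
  - by rewrite mulr0 addr0 W_le.
rewrite !EW_truncated.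
apply: (@lt_le_trans _ _ (\int[P]_w (h q1 w + k * \1_S w)%:E)%E).
  rewrite ge0_integralD_scaled_indic //; last exact: ltW.
  - rewrite lteDl ?mule_gt0 ?lte_fin // -EW_truncated; exact: EW_fin_num.
  - by move=> w; have /andP [/ltW] := h_bounds w q101.
  - exact: measurable_gt.
apply: ge0_le_integral => //.
- move=> w _; rewrite lee_fin addr_ge0 //; last by rewrite mulr_ge0 ?indicE ?ler0n ?ltW.
  by have /andP [/ltW] := h_bounds w q101.
- apply/measurable_EFinP; apply: measurable_funD => //.
  by apply: measurable_funM => //; apply/measurable_indic/measurable_gt.
- exact/measurable_EFinP.
- by move=> w _; rewrite lee_fin; exact: hk.
Qed.

End expected_wait.

Lemma nonneg_fee_le_equilibrium (R : realDomainType) (e : R -> R) (Rw C qs qe : R) :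
  (forall a b, 0 <= a -> a < b -> b <= 1 -> e a < e b) -> 0 < C ->
  0 <= qs <= 1 ->
  (0 <= Rw - C * e 1 /\ qe = 1) \/ (0 <= qe <= 1 /\ C * e qe = Rw) ->
  (0 <= Rw - C * e qs -> qs <= qe) /\ (Rw - C * e qs = 0 -> qs = qe).
Proof.
move=> e_lt C0 /andP [qs0 qs1] [[fee1 ->] | [/andP [qe0 qe1] eqe]].
  split=> // fee0; apply/eqP; rewrite eq_le qs1 leNgt; apply/negP => qs_lt1.
  by have := e_lt _ _ qs0 qs_lt1 (lexx _); nra.
split=> [fee | fee0].
  rewrite leNgt; apply/negP => qe_lt.
  by have := e_lt _ _ qe0 qe_lt qs1; nra.
case: (ltgtP qs qe) => // [qs_lt | qe_lt].
  by have := e_lt _ _ qs0 qs_lt qe1; nra.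
by have := e_lt _ _ qe0 qe_lt qs1; nra.
Qed.

Theorem proposition2 (d : measure_display) (T : measurableType d) (R : realType)
  (P : probability T R) (L : {RV P >-> R})
  (lam mu Rw C lmin lmax qs qe : R) :
  0 < lam -> 0 < C -> C / mu <= Rw ->
  (forall w, 0 <= L w) -> nondegenerate_rv P L ->
  support_min P L lmin -> support_max P L lmax ->
  0 <= lmin -> lmin < lam -> lam < lmax -> lmax < mu ->
  is_qs lam Rw C mu qs -> is_qe P L Rw C mu qe ->
  let ps := (Rw%:E - C%:E * EW P L mu qs)%E in
  ((0 <= ps)%E -> qs <= qe) /\ (ps = 0%E -> qs = qe).
Proof.
move=> _ C0 _ L0 _ _ [lmax_supp lmax_ub] lmin0 lmin_lam lam_lmax lmax_mu
  [qs01 _] hqe ps.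
have lmax0 : 0 < lmax by lra.
have tail0 := support_tail_negligible lmax_ub (ltW lmax0).
have half_lmax : lmax / 2 < lmax by lra.
have mass := support_gt_mass lmax_supp half_lmax.
pose e q := fine (EW P L mu q).
have EWe q : 0 <= q <= 1 -> EW P L mu q = (e q)%:E.
  by move=> q01; rewrite fineK // (EW_fin_num (ltW lmax0) lmax_mu L0 tail0).
have e_lt a b : 0 <= a -> a < b -> b <= 1 -> e a < e b.
  move=> a0 ab b1; rewrite -lte_fin -!EWe; last 2 first.
  - by rewrite b1 (le_trans a0 (ltW ab)).
  - by rewrite a0 (ltW (lt_le_trans ab b1)).
  by apply: (EW_lt (ltW lmax0) lmax_mu L0 tail0 a0 ab b1 _ _ mass); lra.
have qe_real : (0 <= Rw - C * e 1 /\ qe = 1) \/ (0 <= qe <= 1 /\ C * e qe = Rw).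
  case: hqe => [[fee1 ->] | [_ [qe01 eqe]]]; [left | right].
  - by rewrite EWe ?ler01 ?lexx // -EFinM -EFinB lee_fin in fee1.
  - by move: eqe; rewrite EWe // -EFinM => -[].
have [fee_le fee_eq] := nonneg_fee_le_equilibrium e_lt C0 qs01 qe_real.
rewrite /ps EWe // -EFinM -EFinB lee_fin; split; first exact: fee_le.
by move=> -[]; exact: fee_eq.
Qed.
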